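(* Let $G,R,M_\odot,\mu,k,N_A>0$, $\delta>0$, and let $\gamma$ be a positive integer. Set $C=\frac{1}{\gamma!}\prod_{i=1}^{\gamma}\left(\frac{3}{\delta}+i\right)$, $\rho(r)=\frac{3M_\odot}{4\pi R^3}C\left[1-(r/R)^\delta\right]^\gamma$, $M(r)=\int_0^r4\pi s^2\rho(s)\,ds$, $P(r)=\int_r^R GM(s)\rho(s)s^{-2}\,ds$, and define the temperature by the perfect gas law $T(r)=\frac{\mu\,P(r)}{kN_A\,\rho(r)}$ for $0\le r<R$. Then with $x=r/R\in[0,1)$, $$T(r)=3\frac{\mu}{kN_A}\frac{GM_\odot}{R}\,C\,\frac{1}{\delta^2}\,\frac{1}{(1-x^\delta)^\gamma}\sum_{m=0}^{\gamma}\frac{(-\gamma)_m}{m!\left(\frac{3}{\delta}+m\right)\left(\frac{2}{\delta}+m\right)}\left[\frac{\gamma!}{\left(\frac{2}{\delta}+m+1\right)_\gamma}-x^{m\delta+2}\,{}_2F_1\!\left(-\gamma,\frac{2}{\delta}+m;\frac{2}{\delta}+m+1;x^\delta\right)\right],$$ and moreover $T(r)\to0$ as $r\to R^-$.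
   Context: $(a)_m=a(a+1)\cdots(a+m-1)$, $(a)_0=1$, is the Pochhammer symbol. ${}_2F_1(a,b;c;z)=\sum_{k\ge0}\frac{(a)_k(b)_k}{(c)_k k!}z^k$ is Gauss' hypergeometric function. *)

From Stdlib Require Import Reals Factorial.
From Coquelicot Require Import Coquelicot.
Open Scope R_scope.

Fixpoint poch (a : R) (m : nat) : R :=
  match m with O => 1 | S m' => poch a m' * (a + INR m') end.

Fixpoint prod1 (f : nat -> R) (n : nat) : R :=
  match n with O => 1 | S n' => prod1 f n' * f n end.

(* real power x^d for x >= 0 (with 0^d = 0, the right value for d > 0) *)
Definition rpow (x d : R) : R := if Rle_dec x 0 then 0 else Rpower x d.

Definition F21 (a b c z : R) : R :=
  Series (fun k => poch a k * poch b k / (poch c k * INR (fact k)) * z ^ k).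

Definition Cconst (delta : R) (gamma : nat) : R :=
  / INR (fact gamma) * prod1 (fun i => 3 / delta + INR i) gamma.

Definition rho (Msun Rs delta : R) (gamma : nat) (r : R) : R :=
  3 * Msun / (4 * PI * Rs ^ 3) * Cconst delta gamma * (1 - rpow (r / Rs) delta) ^ gamma.

Definition Mass (Msun Rs delta : R) (gamma : nat) (r : R) : R :=
  RInt (fun s => 4 * PI * s ^ 2 * rho Msun Rs delta gamma s) 0 r.

Definition Press (G Msun Rs delta : R) (gamma : nat) (r : R) : R :=
  RInt (fun s => G * Mass Msun Rs delta gamma s * rho Msun Rs delta gamma s / s ^ 2) r Rs.

Definition Temp (G Msun Rs mu kB NA delta : R) (gamma : nat) (r : R) : R :=
  mu * Press G Msun Rs delta gamma r / (kB * NA * rho Msun Rs delta gamma r).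

From Stdlib Require Import Reals Factorial Lra Lia.
From Coquelicot Require Import Coquelicot.
Open Scope R_scope.

(* Expanding (1 - x^delta)^gamma = sum_j (-gamma)_j / j! x^(j delta) turns the density, the
   mass and the pressure integrand into finite sums of powers of x = r / R, which are
   integrated termwise.  In the pressure the inner sum over j then collapses: with
   b = 2/delta + m, sum_j (-gamma)_j / (j! (b + j)) = gamma! / (b (b+1)_gamma) is a Beta
   integral, and the same sum weighted by x^(j delta) is the terminating series
   2F1(-gamma, b; b+1; x^delta) / b.
   For the limit: rho is nonincreasing and M is bounded, so on [r, R] the pressure integrand
   is at most a constant times rho(r); hence P(r) = O((R - r) rho(r)) and T(r) = O(R - r). *)

(** * Real powers *)

Lemma rpow_Rpower x p : 0 < x -> rpow x p = Rpower x p.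
Proof. intros Hx; unfold rpow; destruct (Rle_dec x 0); [lra | reflexivity]. Qed.

Lemma rpow_nonpos x p : x <= 0 -> rpow x p = 0.
Proof. intros Hx; unfold rpow; destruct (Rle_dec x 0); [reflexivity | lra]. Qed.

Lemma rpow_ge0 x p : 0 <= rpow x p.
Proof.
  unfold rpow; destruct (Rle_dec x 0); [lra |].
  left; apply exp_pos.
Qed.

Lemma rpow_1_l p : rpow 1 p = 1.
Proof. rewrite rpow_Rpower by lra; unfold Rpower; rewrite ln_1, Rmult_0_r; apply exp_0. Qed.

Lemma rpow_plus x p q : 0 < x -> rpow x (p + q) = rpow x p * rpow x q.
Proof. intros Hx; rewrite !rpow_Rpower by exact Hx; apply Rpower_plus. Qed.

Lemma rpow_INR x n : 0 < x -> rpow x (INR n) = x ^ n.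
Proof. intros Hx; rewrite rpow_Rpower by exact Hx; apply Rpower_pow, Hx. Qed.

Lemma rpow_mul_pow x q d k : rpow x q * rpow x d ^ k = rpow x (q + INR k * d).
Proof.
  destruct (Rle_dec x 0) as [Hx | Hx].
  - rewrite !(rpow_nonpos x) by exact Hx; ring.
  - assert (Hpos : 0 < Rpower x d) by apply exp_pos.
    rewrite rpow_plus, !(rpow_Rpower x), <- Rpower_pow, Rpower_mult, (Rmult_comm d) by lra.
    reflexivity.
Qed.

Lemma rpow_le_compat x y d : 0 <= d -> x <= y -> rpow x d <= rpow y d.
Proof.
  intros Hd Hxy; destruct (Rle_dec x 0) as [Hx | Hx].
  - rewrite (rpow_nonpos x) by exact Hx; apply rpow_ge0.
  - rewrite !rpow_Rpower by lra; apply Rle_Rpower_l; lra.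
Qed.

Lemma rpow_lt_1 x d : 0 < d -> x < 1 -> rpow x d < 1.
Proof.
  intros Hd Hx; destruct (Rle_dec x 0) as [Hx0 | Hx0].
  - rewrite rpow_nonpos by exact Hx0; lra.
  - rewrite <- (rpow_1_l d), !rpow_Rpower by lra; apply Rlt_Rpower_l; lra.
Qed.

Lemma rpow_le_1 x d : 0 <= d -> x <= 1 -> rpow x d <= 1.
Proof. intros Hd Hx; rewrite <- (rpow_1_l d); now apply rpow_le_compat. Qed.

Lemma rpow_lt_of_lt p eps u : 0 < p -> 0 < eps -> u < Rpower eps (/ p) -> rpow u p < eps.
Proof.
  intros Hp He Hu; destruct (Rle_dec u 0) as [Hu0 | Hu0].
  - rewrite rpow_nonpos by exact Hu0; exact He.
  - replace eps with (Rpower (Rpower eps (/ p)) p)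
      by (rewrite Rpower_mult, Rinv_l, Rpower_1; lra).
    rewrite rpow_Rpower by lra; apply Rlt_Rpower_l; lra.
Qed.

Lemma continuous_rpow p x : 0 < p -> continuous (fun t => rpow t p) x.
Proof.
  intros Hp; destruct (Rtotal_order x 0) as [Hx | [-> | Hx]].
  - apply continuous_ext_loc with (fun _ => 0); [| apply continuous_const].
    apply locally_interval with m_infty 0; simpl; auto.
    intros y _ Hy; symmetry; apply rpow_nonpos; lra.
  - apply filterlim_locally; intros eps.
    assert (Hd : 0 < Rpower eps (/ p)) by apply exp_pos.
    exists (mkposreal _ Hd); intros y Hy; change (Rabs (rpow y p - rpow 0 p) < eps).
    change (Rabs (y - 0) < Rpower eps (/ p)) in Hy.
    rewrite (rpow_nonpos 0), Rminus_0_r, Rabs_pos_eq by (apply rpow_ge0 || lra).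
    apply rpow_lt_of_lt; [exact Hp | apply cond_pos |].
    rewrite Rminus_0_r in Hy; apply Rabs_def2 in Hy; lra.
  - apply continuous_ext_loc with (fun t => Rpower t p).
    + apply locally_interval with 0 p_infty; simpl; auto.
      intros y Hy _; symmetry; apply rpow_Rpower, Hy.
    + apply (@ex_derive_continuous R_AbsRing R_NormedModule); eexists.
      apply is_derive_Reals, derivable_pt_lim_power, Hx.
Qed.

Lemma is_derive_rpow q x : 1 < q -> is_derive (fun t => rpow t q) x (q * rpow x (q - 1)).
Proof.
  intros Hq; destruct (Rtotal_order x 0) as [Hx | [-> | Hx]].
  - rewrite rpow_nonpos, Rmult_0_r by lra.
    apply is_derive_ext_loc with (fun _ => 0); [| apply (is_derive_const 0)].
    apply locally_interval with m_infty 0; simpl; auto.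
    intros y _ Hy; symmetry; apply rpow_nonpos; lra.
  - rewrite rpow_nonpos, Rmult_0_r by lra.
    apply is_derive_Reals; intros eps He.
    assert (Hd : 0 < Rpower eps (/ (q - 1))) by apply exp_pos.
    exists (mkposreal _ Hd); intros h Hh Hhd; simpl in Hhd.
    rewrite Rplus_0_l, (rpow_nonpos 0), !Rminus_0_r by lra.
    destruct (Rle_dec h 0) as [Hh0 | Hh0].
    + rewrite rpow_nonpos by exact Hh0; unfold Rdiv; rewrite Rmult_0_l, Rabs_R0; exact He.
    + replace (rpow h q / h) with (rpow h (q - 1)).
      * rewrite Rabs_pos_eq by apply rpow_ge0.
        apply rpow_lt_of_lt; [lra | exact He | apply Rabs_def2 in Hhd; lra].
      * replace q with ((q - 1) + INR 1) at 2 by (simpl; ring).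
        rewrite rpow_plus, rpow_INR by lra; field; lra.
  - apply is_derive_ext_loc with (fun t => Rpower t q).
    + apply locally_interval with 0 p_infty; simpl; auto.
      intros y Hy _; symmetry; apply rpow_Rpower, Hy.
    + rewrite rpow_Rpower by exact Hx.
      apply is_derive_Reals, derivable_pt_lim_power, Hx.
Qed.

(** * Terminating binomial and hypergeometric sums *)

Lemma poch_succ_l b j : poch b (S j) = b * poch (b + 1) j.
Proof.
  induction j as [| j IHj]; [simpl; ring |].
  change (poch b (S j) * (b + INR (S j)) = b * (poch (b + 1) j * (b + 1 + INR j))).
  rewrite IHj, S_INR; ring.
Qed.

Lemma poch_gt0 b j : 0 < b -> 0 < poch b j.
Proof.
  intros Hb; induction j as [| j IHj]; simpl; [lra |].
  apply Rmult_lt_0_compat; [exact IHj | pose proof (pos_INR j); lra].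
Qed.

Lemma poch_opp_INR n j : (n < j)%nat -> poch (- INR n) j = 0.
Proof.
  induction j as [| j IHj]; intros Hnj; [lia |]; simpl.
  destruct (Nat.eq_dec j n) as [-> | Hjn]; [ring |].
  rewrite IHj by lia; ring.
Qed.

(* [binc n j = (-1)^j * C(n, j)], the coefficient of [y^j] in [(1 - y)^n]. *)
Definition binc (n j : nat) : R := poch (- INR n) j / INR (fact j).

Lemma binc_0 n : binc n 0 = 1.
Proof. unfold binc; simpl; field. Qed.

Lemma binc_gt n j : (n < j)%nat -> binc n j = 0.
Proof. intros Hnj; unfold binc; rewrite poch_opp_INR by exact Hnj; apply Rdiv_0_l. Qed.

Lemma binc_succ n j : binc (S n) (S j) = binc n (S j) - binc n j.
Proof.
  unfold binc; rewrite poch_succ_l.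
  change (poch (- INR n) (S j)) with (poch (- INR n) j * (- INR n + INR j)).
  replace (- INR (S n) + 1) with (- INR n) by (rewrite S_INR; ring).
  change (fact (S j)) with (S j * fact j)%nat; rewrite mult_INR, !S_INR.
  pose proof (INR_fact_neq_0 j); pose proof (pos_INR j); field; lra.
Qed.

Lemma sum_binc_succ n (g : nat -> R) :
  sum_f_R0 (fun j => binc (S n) j * g j) (S n) =
  sum_f_R0 (fun j => binc n j * (g j - g (S j))) n.
Proof.
  assert (Hlast : sum_f_R0 (fun j => binc n j * g j) (S n) = sum_f_R0 (fun j => binc n j * g j) n)
    by (rewrite tech5, (binc_gt n (S n)), Rmult_0_l, Rplus_0_r by lia; reflexivity).
  rewrite decomp_sum in Hlast |- * by lia; simpl pred in Hlast |- *.
  rewrite (sum_eq _ (fun j => binc n (S j) * g (S j) - binc n j * g (S j)))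
    by (intros j _; rewrite binc_succ; ring).
  rewrite minus_sum, (sum_eq (fun j => binc n j * (g j - g (S j)))
    (fun j => binc n j * g j - binc n j * g (S j))) by (intros j _; ring).
  rewrite minus_sum, <- Hlast, !binc_0; ring.
Qed.

Lemma binomial_binc n y : (1 - y) ^ n = sum_f_R0 (fun j => binc n j * y ^ j) n.
Proof.
  induction n as [| n IHn]; [simpl; rewrite binc_0; ring |].
  rewrite (sum_binc_succ n (fun j => y ^ j)), <- tech_pow_Rmult, IHn, scal_sum.
  apply sum_eq; intros j _; simpl; ring.
Qed.

(* Both sides equal the Beta integral [int_0^1 t^(b-1) (1-t)^n dt]. *)
Lemma sum_binc_inv n b : 0 < b ->
  sum_f_R0 (fun j => binc n j / (b + INR j)) n = INR (fact n) / poch b (S n).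
Proof.
  revert b; induction n as [| n IHn]; intros b Hb.
  - simpl; rewrite binc_0; field; lra.
  - rewrite (sum_eq _ (fun j => binc (S n) j * / (b + INR j)))
      by (intros; reflexivity).
    rewrite sum_binc_succ.
    rewrite (sum_eq _ (fun j => binc n j / (b + INR j) - binc n j / (b + 1 + INR j))).
    2:{ intros j _; rewrite S_INR; pose proof (pos_INR j); field; lra. }
    rewrite minus_sum, !IHn by lra.
    assert (Hp : b * poch (b + 1) (S n) = poch b (S n) * (b + INR (S n)))
      by (rewrite <- poch_succ_l; reflexivity).
    pose proof (poch_gt0 b (S n) Hb); pose proof (pos_INR n).
    replace (poch (b + 1) (S n)) with (poch b (S n) * (b + INR (S n)) / b)
      by (rewrite <- Hp; field; lra).
    change (poch b (S (S n))) with (poch b (S n) * (b + INR (S n))).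
    change (fact (S n)) with (S n * fact n)%nat; rewrite mult_INR, !S_INR.
    field; lra.
Qed.

Lemma F21_opp_INR n b c z : F21 (- INR n) b c z =
  sum_f_R0 (fun k => poch (- INR n) k * poch b k / (poch c k * INR (fact k)) * z ^ k) n.
Proof.
  unfold F21; apply is_series_unique.
  set (a := fun k => poch (- INR n) k * poch b k / (poch c k * INR (fact k)) * z ^ k).
  assert (Hconst : forall k, (n <= k)%nat -> sum_n a k = sum_f_R0 a n).
  { intros k Hk; rewrite sum_n_Reals; change (sum_f_R0 a k = sum_f_R0 a n).
    induction Hk as [| k Hk IHk]; [reflexivity |].
    rewrite tech5, IHk; unfold a; rewrite poch_opp_INR by lia; unfold Rdiv; ring. }
  apply filterlim_locally; intros eps; exists n; intros k Hk.
  rewrite Hconst by lia; apply ball_center.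
Qed.

Lemma F21_opp_INR_succ n b z : 0 < b ->
  F21 (- INR n) b (b + 1) z = b * sum_f_R0 (fun j => binc n j / (b + INR j) * z ^ j) n.
Proof.
  intros Hb; rewrite F21_opp_INR, scal_sum; apply sum_eq; intros j _.
  assert (Hpoch : poch b j * (b + INR j) = b * poch (b + 1) j)
    by (rewrite <- poch_succ_l; reflexivity).
  pose proof (poch_gt0 (b + 1) j ltac:(lra)); pose proof (pos_INR j).
  pose proof (INR_fact_neq_0 j).
  unfold binc; replace (poch b j) with (b * poch (b + 1) j / (b + INR j))
    by (rewrite <- Hpoch; field; lra).
  field; repeat split; lra.
Qed.

Lemma sum_binc_beta n d b x : 0 < d -> 0 < b ->
  sum_f_R0 (fun j => binc n j / (d * (b + INR j)) * (1 - rpow x (d * (b + INR j)))) n =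
  / (d * b) * (INR (fact n) / poch (b + 1) n
               - rpow x (d * b) * F21 (- INR n) b (b + 1) (rpow x d)).
Proof.
  intros Hd Hb.
  rewrite (sum_eq _ (fun j => binc n j / (b + INR j) * / d
                             - binc n j / (b + INR j) * rpow x d ^ j * (rpow x (d * b) / d))).
  2:{ intros j _; replace (d * (b + INR j)) with (d * b + INR j * d) by ring.
      assert (0 < d * b + INR j * d) by (pose proof (pos_INR j); nra).
      rewrite <- rpow_mul_pow; field; pose proof (pos_INR j); lra. }
  rewrite minus_sum, <- !scal_sum, sum_binc_inv, F21_opp_INR_succ, poch_succ_l by lra.
  pose proof (poch_gt0 (b + 1) n ltac:(lra)); field; lra.
Qed.

(** * Termwise integration of powers of [s / Rs] *)

Lemma is_RInt_sum (f : nat -> R -> R) (I : nat -> R) a b n :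
  (forall m, is_RInt (f m) a b (I m)) ->
  is_RInt (fun t => sum_f_R0 (fun m => f m t) n) a b (sum_f_R0 I n).
Proof.
  intros Hf; induction n as [| n IHn]; [apply Hf |].
  exact (is_RInt_plus _ (f (S n)) _ _ _ _ IHn (Hf (S n))).
Qed.

Lemma is_derive_rpow_div Rs q s : 0 < Rs -> 1 < q ->
  is_derive (fun s => rpow (s / Rs) q) s (q / Rs * rpow (s / Rs) (q - 1)).
Proof.
  intros HRs Hq.
  assert (Hdiv : is_derive (fun s => s / Rs) s (/ Rs)) by (auto_derive; [easy | field; lra]).
  replace (q / Rs * rpow (s / Rs) (q - 1)) with (/ Rs * (q * rpow (s / Rs) (q - 1)))
    by (field; lra).
  exact (is_derive_comp (fun t => rpow t q) _ _ _ _ (is_derive_rpow q _ Hq) Hdiv).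
Qed.

Lemma is_RInt_rpow_div Rs p a b : 0 < Rs -> 0 < p ->
  is_RInt (fun s => rpow (s / Rs) p) a b
    (Rs / (p + 1) * (rpow (b / Rs) (p + 1) - rpow (a / Rs) (p + 1))).
Proof.
  intros HRs Hp.
  set (F s := Rs / (p + 1) * rpow (s / Rs) (p + 1)).
  replace (Rs / (p + 1) * _) with (minus (F b) (F a))
    by (unfold F, minus, plus, opp; simpl; ring).
  apply (is_RInt_derive F (fun s => rpow (s / Rs) p)).
  - intros t _; unfold F.
    replace (rpow (t / Rs) p) with (Rs / (p + 1) * ((p + 1) / Rs * rpow (t / Rs) (p + 1 - 1)))
      by (replace (p + 1 - 1) with p by ring; field; lra).
    apply is_derive_scal, is_derive_rpow_div; lra.
  - intros t _.
    apply (continuous_comp (fun s => s / Rs) (fun t => rpow t p)); [| now apply continuous_rpow].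
    apply (@ex_derive_continuous R_AbsRing R_NormedModule); auto_derive; easy.
Qed.

Lemma is_RInt_sum_rpow_div Rs (c p : nat -> R) n a b : 0 < Rs -> (forall j, 0 < p j) ->
  is_RInt (fun s => sum_f_R0 (fun j => c j * rpow (s / Rs) (p j)) n) a b
    (sum_f_R0 (fun j => c j * (Rs / (p j + 1)
                             * (rpow (b / Rs) (p j + 1) - rpow (a / Rs) (p j + 1)))) n).
Proof.
  intros HRs Hp; apply (is_RInt_sum (fun j s => c j * rpow (s / Rs) (p j))); intros j.
  exact (is_RInt_scal _ _ _ (c j) _ (is_RInt_rpow_div Rs (p j) a b HRs (Hp j))).
Qed.

Lemma rpow_mul_binomial x q d n :
  rpow x q * (1 - rpow x d) ^ n = sum_f_R0 (fun j => binc n j * rpow x (q + INR j * d)) n.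
Proof.
  rewrite binomial_binc, scal_sum; apply sum_eq; intros j _.
  rewrite <- rpow_mul_pow; ring.
Qed.

(** * The polytropic star *)

Definition central_density (Msun Rs delta : R) (gamma : nat) : R :=
  3 * Msun / (4 * PI * Rs ^ 3) * Cconst delta gamma.

Section Polytrope.

Variables (G Msun Rs delta : R) (gamma : nat).
Hypotheses (HRs : 0 < Rs) (Hdelta : 0 < delta).

Local Notation rhoc := (central_density Msun Rs delta gamma).
Local Notation density := (rho Msun Rs delta gamma).
Local Notation mass := (Mass Msun Rs delta gamma).

Lemma Cconst_pos : 0 < Cconst delta gamma.
Proof.
  assert (Hprod : forall n, 0 < prod1 (fun i => 3 / delta + INR i) n).
  { induction n as [| n IHn]; cbn [prod1]; [lra |].
    apply Rmult_lt_0_compat; [exact IHn |].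
    assert (0 < 3 / delta) by (apply Rdiv_lt_0_compat; lra); pose proof (pos_INR (S n)); lra. }
  apply Rmult_lt_0_compat; [apply Rinv_0_lt_compat, lt_0_INR, lt_O_fact | apply Hprod].
Qed.

Lemma one_sub_rpow_pos r : r < Rs -> 0 < 1 - rpow (r / Rs) delta.
Proof.
  intros Hr; enough (rpow (r / Rs) delta < 1) by lra.
  apply rpow_lt_1; [exact Hdelta | apply Rlt_div_l; lra].
Qed.

Lemma is_RInt_mass_density r : 0 <= r ->
  is_RInt (fun s => 4 * PI * s ^ 2 * density s) 0 r
    (4 * PI * rhoc * Rs ^ 3 * sum_f_R0 (fun j => binc gamma j / (INR j * delta + 3)
                                        * rpow (r / Rs) (INR j * delta + 3)) gamma).
Proof.
  intros Hr.
  set (p j := 2 + INR j * delta).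
  assert (Hp : forall j, 0 < p j) by (intros j; unfold p; pose proof (pos_INR j); nra).
  apply (is_RInt_ext (fun s => 4 * PI * rhoc * Rs ^ 2
                               * sum_f_R0 (fun j => binc gamma j * rpow (s / Rs) (p j)) gamma)).
  - intros s Hs; rewrite Rmin_left, Rmax_right in Hs by lra; simpl.
    unfold p; rewrite <- rpow_mul_binomial.
    replace 2 with (INR 2) at 1 by reflexivity.
    rewrite rpow_INR by (apply Rdiv_lt_0_compat; lra).
    unfold rho, central_density; field; split; [lra | apply PI_neq0].
  - replace (4 * PI * rhoc * Rs ^ 3) with (4 * PI * rhoc * Rs ^ 2 * Rs) by ring.
    rewrite (Rmult_assoc (4 * PI * rhoc * Rs ^ 2) Rs), scal_sum.
    rewrite (sum_eq _ (fun j => binc gamma j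
      * (Rs / (p j + 1) * (rpow (r / Rs) (p j + 1) - rpow (0 / Rs) (p j + 1))))).
    + exact (is_RInt_scal _ _ _ _ _ (is_RInt_sum_rpow_div Rs _ p gamma 0 r HRs Hp)).
    + intros j _; rewrite Rdiv_0_l, (rpow_nonpos 0) by lra; unfold p.
      replace (2 + INR j * delta + 1) with (INR j * delta + 3) by ring.
      field; pose proof (pos_INR j); nra.
Qed.

Lemma Mass_eq r : 0 <= r ->
  mass r = 4 * PI * rhoc * Rs ^ 3 * sum_f_R0 (fun j => binc gamma j / (INR j * delta + 3)
                                               * rpow (r / Rs) (INR j * delta + 3)) gamma.
Proof. intros Hr; exact (is_RInt_unique _ _ _ _ (is_RInt_mass_density r Hr)). Qed.

Lemma pressure_integrand_eq s : 0 < s ->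
  G * mass s * density s / s ^ 2 =
  G * 4 * PI * rhoc ^ 2 * Rs * sum_f_R0 (fun m => binc gamma m / (INR m * delta + 3)
    * sum_f_R0 (fun j => binc gamma j * rpow (s / Rs) (INR m * delta + 1 + INR j * delta)) gamma)
    gamma.
Proof.
  intros Hs; assert (Hx : 0 < s / Rs) by (apply Rdiv_lt_0_compat; lra).
  rewrite (sum_eq _ (fun m => binc gamma m / (INR m * delta + 3) * rpow (s / Rs) (INR m * delta + 3)
                              * ((1 - rpow (s / Rs) delta) ^ gamma / (s / Rs) ^ 2))).
  2:{ intros m _; rewrite <- rpow_mul_binomial.
      replace (INR m * delta + 3) with (INR m * delta + 1 + INR 2) by (simpl; ring).
      rewrite (rpow_plus _ (INR m * delta + 1)), rpow_INR by exact Hx.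
      field; pose proof (pos_INR m); simpl INR; repeat split; nra. }
  rewrite <- scal_sum, Mass_eq by lra; unfold rho, central_density.
  field; repeat split; [lra | lra | apply PI_neq0].
Qed.

Lemma is_RInt_pressure_integrand r : 0 <= r <= Rs ->
  is_RInt (fun s => G * mass s * density s / s ^ 2) r Rs
    (G * 4 * PI * rhoc ^ 2 * Rs ^ 2 * sum_f_R0 (fun m => binc gamma m / (INR m * delta + 3)
      * sum_f_R0 (fun j => binc gamma j / (delta * (2 / delta + INR m + INR j))
                           * (1 - rpow (r / Rs) (delta * (2 / delta + INR m + INR j)))) gamma)
      gamma).
Proof.
  intros Hr.
  set (p m j := INR m * delta + 1 + INR j * delta).
  assert (Hp : forall m j, 0 < p m j)
    by (intros m j; unfold p; pose proof (pos_INR m); pose proof (pos_INR j); nra).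
  apply (is_RInt_ext (fun s => G * 4 * PI * rhoc ^ 2 * Rs * sum_f_R0 (fun m =>
    binc gamma m / (INR m * delta + 3) * sum_f_R0 (fun j => binc gamma j * rpow (s / Rs) (p m j))
    gamma) gamma)).
  { intros s Hs; rewrite Rmin_left, Rmax_right in Hs by lra; simpl.
    symmetry; apply pressure_integrand_eq; lra. }
  replace (G * 4 * PI * rhoc ^ 2 * Rs ^ 2) with (G * 4 * PI * rhoc ^ 2 * Rs * Rs) by ring.
  rewrite (Rmult_assoc (G * 4 * PI * rhoc ^ 2 * Rs) Rs), scal_sum.
  rewrite (sum_eq _ (fun m => binc gamma m / (INR m * delta + 3) * sum_f_R0 (fun j => binc gamma j
    * (Rs / (p m j + 1) * (rpow (Rs / Rs) (p m j + 1) - rpow (r / Rs) (p m j + 1)))) gamma)).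
  - apply (is_RInt_scal (V := R_NormedModule)).
    apply (is_RInt_sum (fun m s => binc gamma m / (INR m * delta + 3)
                                   * sum_f_R0 (fun j => binc gamma j * rpow (s / Rs) (p m j)) gamma)).
    intros m; apply (is_RInt_scal (V := R_NormedModule)), is_RInt_sum_rpow_div; [exact HRs | apply Hp].
  - intros m _; replace (Rs / Rs) with 1 by (field; lra).
    rewrite Rmult_assoc; f_equal; rewrite Rmult_comm, scal_sum.
    apply sum_eq; intros j _; rewrite rpow_1_l.
    replace (delta * (2 / delta + INR m + INR j)) with (p m j + 1) by (unfold p; field; lra).
    field; specialize (Hp m j); lra.
Qed.

Lemma Press_eq r : 0 <= r <= Rs ->
  Press G Msun Rs delta gamma r =
    G * 4 * PI * rhoc ^ 2 * Rs ^ 2 * sum_f_R0 (fun m => binc gamma m / (INR m * delta + 3)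
      * sum_f_R0 (fun j => binc gamma j / (delta * (2 / delta + INR m + INR j))
                           * (1 - rpow (r / Rs) (delta * (2 / delta + INR m + INR j)))) gamma)
      gamma.
Proof. intros Hr; exact (is_RInt_unique _ _ _ _ (is_RInt_pressure_integrand r Hr)). Qed.

Variables (mu kB NA : R).
Hypotheses (HG : 0 < G) (HMsun : 0 < Msun) (Hmu : 0 < mu) (HkB : 0 < kB) (HNA : 0 < NA).

Local Notation temperature := (Temp G Msun Rs mu kB NA delta gamma).

Lemma central_density_pos : 0 < rhoc.
Proof.
  pose proof Cconst_pos; pose proof PI_RGT_0; unfold central_density.
  apply Rmult_lt_0_compat; [apply Rdiv_lt_0_compat; [lra | pose proof (pow_lt Rs 3 HRs); nra] | lra].
Qed.

Lemma Temp_eq r : 0 <= r < Rs ->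
  temperature r =
  3 * (mu / (kB * NA)) * (G * Msun / Rs) * Cconst delta gamma * (1 / delta ^ 2)
  * (1 / (1 - rpow (r / Rs) delta) ^ gamma)
  * sum_f_R0 (fun m =>
      poch (- INR gamma) m / (INR (fact m) * (3 / delta + INR m) * (2 / delta + INR m))
      * (INR (fact gamma) / poch (2 / delta + INR m + 1) gamma
         - rpow (r / Rs) (INR m * delta + 2)
           * F21 (- INR gamma) (2 / delta + INR m) (2 / delta + INR m + 1) (rpow (r / Rs) delta)))
    gamma.
Proof.
  intros Hr; unfold Temp; rewrite Press_eq by lra.
  rewrite (sum_eq _ (fun m =>
    poch (- INR gamma) m / (INR (fact m) * (3 / delta + INR m) * (2 / delta + INR m))
    * (INR (fact gamma) / poch (2 / delta + INR m + 1) gamma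
       - rpow (r / Rs) (INR m * delta + 2)
         * F21 (- INR gamma) (2 / delta + INR m) (2 / delta + INR m + 1) (rpow (r / Rs) delta))
    * / delta ^ 2)).
  2:{ intros m _.
      assert (Hm : 0 <= INR m * delta) by (pose proof (pos_INR m); nra).
      assert (Hb : 0 < 2 / delta + INR m)
        by (pose proof (pos_INR m); pose proof (Rdiv_lt_0_compat 2 delta ltac:(lra) Hdelta); lra).
      rewrite sum_binc_beta by lra.
      replace (delta * (2 / delta + INR m)) with (INR m * delta + 2) by (field; lra).
      pose proof (INR_fact_neq_0 m); pose proof (poch_gt0 (2 / delta + INR m + 1) gamma ltac:(lra)).
      unfold binc; field; repeat split; lra. }
  rewrite <- scal_sum; unfold rho, central_density.
  assert (Hx : 0 < (1 - rpow (r / Rs) delta) ^ gamma)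
    by (apply pow_lt, one_sub_rpow_pos; lra).
  pose proof Cconst_pos; pose proof PI_RGT_0.
  field; repeat split; lra.
Qed.

Lemma density_bounds r t : r <= t <= Rs -> 0 <= density t <= density r.
Proof.
  intros Hrt; pose proof central_density_pos.
  assert (Hle : rpow (r / Rs) delta <= rpow (t / Rs) delta)
    by (apply rpow_le_compat; [lra | apply Rmult_le_compat_r; [apply Rlt_le, Rinv_0_lt_compat |]; lra]).
  assert (Ht1 : rpow (t / Rs) delta <= 1) by (apply rpow_le_1; [lra | apply Rle_div_l; lra]).
  unfold rho; fold rhoc; split.
  - apply Rmult_le_pos; [lra | apply pow_le; lra].
  - apply Rmult_le_compat_l; [lra | apply pow_incr; lra].
Qed.

Lemma Mass_bound t : 0 <= t <= Rs -> Rabs (mass t) <= 4 * PI * rhoc * Rs ^ 3.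
Proof.
  intros Ht; pose proof central_density_pos; pose proof PI_RGT_0.
  assert (Hrhoc : density 0 = rhoc)
    by (unfold rho; rewrite Rdiv_0_l, rpow_nonpos, Rminus_0_r, pow1 by lra; apply Rmult_1_r).
  replace (4 * PI * rhoc * Rs ^ 3) with (Rs * (4 * PI * Rs ^ 2 * rhoc)) by ring.
  eapply Rle_trans.
  - apply abs_RInt_le_const with (M := 4 * PI * Rs ^ 2 * rhoc); [lra | | ].
    + eexists; apply is_RInt_mass_density; lra.
    + intros s Hs; pose proof (density_bounds 0 s ltac:(lra)) as Hrho; rewrite Hrhoc in Hrho.
      assert (Hs2 : s ^ 2 <= Rs ^ 2) by (apply pow_incr; lra).
      rewrite Rabs_pos_eq by (pose proof (pow2_ge_0 s); apply Rmult_le_pos; nra).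
      apply Rmult_le_compat; try nra; pose proof (pow2_ge_0 s); nra.
  - assert (0 < 4 * PI * Rs ^ 2 * rhoc)
      by (pose proof (pow_lt Rs 2 HRs); apply Rmult_lt_0_compat; nra).
    apply Rmult_le_compat_r; lra.
Qed.

Lemma Press_bound r : Rs / 2 <= r <= Rs ->
  Rabs (Press G Msun Rs delta gamma r)
  <= (Rs - r) * (G * (4 * PI * rhoc * Rs ^ 3) * density r * (4 / Rs ^ 2)).
Proof.
  intros Hr; unfold Press.
  apply abs_RInt_le_const; [lra | eexists; apply is_RInt_pressure_integrand; lra |].
  intros t Ht.
  pose proof (Mass_bound t ltac:(lra)); pose proof (density_bounds r t ltac:(lra)).
  assert (Ht2 : Rs ^ 2 / 4 <= t ^ 2) by nra.
  assert (Hinv : / t ^ 2 <= 4 / Rs ^ 2).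
  { replace (4 / Rs ^ 2) with (/ (Rs ^ 2 / 4)) by (field; lra).
    apply Rinv_le_contravar; [nra | exact Ht2]. }
  unfold Rdiv; rewrite !Rabs_mult, Rabs_inv, (Rabs_pos_eq G), (Rabs_pos_eq (density t)),
    (Rabs_pos_eq (t ^ 2)) by (nra || lra).
  apply Rmult_le_compat; [| apply Rlt_le, Rinv_0_lt_compat; nra | | exact Hinv].
  - apply Rmult_le_pos; [apply Rmult_le_pos, Rabs_pos | ]; lra.
  - apply Rmult_le_compat; [apply Rmult_le_pos, Rabs_pos; lra | lra | | lra].
    apply Rmult_le_compat_l; lra.
Qed.

Lemma Temp_bound r : Rs / 2 <= r < Rs ->
  Rabs (temperature r) <= mu / (kB * NA) * (G * (4 * PI * rhoc * Rs ^ 3) * (4 / Rs ^ 2)) * (Rs - r).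
Proof.
  intros Hr; pose proof (Press_bound r ltac:(lra)) as HP.
  assert (Hrho : 0 < density r)
    by (unfold rho; fold rhoc; apply Rmult_lt_0_compat;
        [apply central_density_pos | apply pow_lt, one_sub_rpow_pos; lra]).
  unfold Temp; unfold Rdiv at 1.
  rewrite Rabs_mult, Rabs_mult, Rabs_inv, (Rabs_pos_eq mu), (Rabs_pos_eq (kB * NA * density r))
    by (try apply Rlt_le, Rmult_lt_0_compat, Hrho; nra).
  apply Rle_trans with (mu * ((Rs - r) * (G * (4 * PI * rhoc * Rs ^ 3) * density r * (4 / Rs ^ 2)))
                        * / (kB * NA * density r)).
  - apply Rmult_le_compat_r; [apply Rlt_le, Rinv_0_lt_compat, Rmult_lt_0_compat; nra |].
    apply Rmult_le_compat_l; lra.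
  - right; field; repeat split; lra.
Qed.

Lemma Temp_limit : filterlim temperature (at_left Rs) (locally 0).
Proof.
  set (B := mu / (kB * NA) * (G * (4 * PI * rhoc * Rs ^ 3) * (4 / Rs ^ 2))).
  assert (Hlin : forall c, filterlim (fun r => c * (Rs - r)) (at_left Rs) (locally 0)).
  { intros c; apply (filterlim_filter_le_1 _ (filter_le_within _)).
    replace (locally 0) with (locally (c * (Rs - Rs))) by (f_equal; ring).
    apply (@ex_derive_continuous R_AbsRing R_NormedModule (fun r => c * (Rs - r))).
    auto_derive; easy. }
  apply (filterlim_le_le (fun r => - B * (Rs - r)) _ (fun r => B * (Rs - r)) 0);
    [| apply Hlin | apply Hlin].
  assert (Hhalf : 0 < Rs / 2) by lra.
  exists (mkposreal _ Hhalf); intros r Hball Hlt.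
  change (Rabs (r - Rs) < Rs / 2) in Hball; apply Rabs_def2 in Hball.
  pose proof (Temp_bound r ltac:(simpl; lra)) as Hb; fold B in Hb.
  apply Rabs_le_between in Hb; lra.
Qed.

End Polytrope.

Theorem mainTheorem5 (G Rs Msun mu kB NA delta : R) (gamma : nat) :
  0 < G -> 0 < Rs -> 0 < Msun -> 0 < mu -> 0 < kB -> 0 < NA -> 0 < delta ->
  (1 <= gamma)%nat ->
  (forall r : R, 0 <= r < Rs ->
     let x := r / Rs in
     Temp G Msun Rs mu kB NA delta gamma r =
     3 * (mu / (kB * NA)) * (G * Msun / Rs) * Cconst delta gamma * (1 / delta ^ 2)
     * (1 / (1 - rpow x delta) ^ gamma)
     * sum_f_R0 (fun m =>
         poch (- INR gamma) m
         / (INR (fact m) * (3 / delta + INR m) * (2 / delta + INR m))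
         * (INR (fact gamma) / poch (2 / delta + INR m + 1) gamma
            - rpow x (INR m * delta + 2)
              * F21 (- INR gamma) (2 / delta + INR m) (2 / delta + INR m + 1)
                    (rpow x delta))) gamma)
  /\ filterlim (Temp G Msun Rs mu kB NA delta gamma) (at_left Rs) (locally 0).
Proof.
  intros HG HRs HMsun Hmu HkB HNA Hdelta _; split.
  - intros r Hr x; now apply Temp_eq.
  - now apply Temp_limit.
Qed.
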